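(* Let $f\in C^2(\mathbb{R}^d)$, $\gamma:\mathbb{R}_+\to\mathbb{R}_+$ continuous with $c\le\gamma(t)\le C$ ($0<c\le C$), $0<\beta<\frac{2c}{C^2}$, and let $x\in C^2([0,T[;\mathbb{R}^d)$ solve $\ddot x+\gamma(t)\dot x+\nabla f(x+\beta\dot x)=0$ on $[0,T[$. Define $V(t)=f(x(t)+\beta\dot x(t))+\frac12\|\dot x(t)\|^2$. Then for all $t\in[0,T[$, $$V'(t)\le-\delta_1\big(\|\dot x(t)\|^2+\|\nabla f(x(t)+\beta\dot x(t))\|^2\big),\qquad \delta_1=\min\Big(\frac c2,\ \beta\Big(1-\frac{\beta C^2}{2c}\Big)\Big)>0.$$ *)

From HB Require Import structures.
From mathcomp Require Import all_boot all_order all_algebra.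
From mathcomp Require Import all_classical all_reals all_analysis.
Set Implicit Arguments. Unset Strict Implicit. Unset Printing Implicit Defensive.
Import Order.TTheory GRing.Theory Num.Theory.
Import numFieldNormedType.Exports.
Local Open Scope classical_set_scope.
Local Open Scope ring_scope.

Definition evec (R : realType) (d : nat) (i : 'I_d) : 'rV[R]_d := delta_mx 0 i.

(* squared Euclidean norm (the library's norm on 'rV is the sup norm) *)
Definition sqnorm (R : realType) (d : nat) (v : 'rV[R]_d) : R :=
  \sum_(i < d) (v 0 i) ^+ 2.

Definition partial (R : realType) (d : nat) (i : 'I_d) (f : 'rV[R]_d -> R)
  (y : 'rV[R]_d) : R := 'D_(evec R i) f y.

Definition grad (R : realType) (d : nat) (f : 'rV[R]_d -> R) (y : 'rV[R]_d)
  : 'rV[R]_d := \row_(i < d) partial i f y.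

Definition C2 (R : realType) (d : nat) (f : 'rV[R]_d -> R) : Prop :=
  [/\ continuous f,
      (forall i y, derivable f y (evec R i)),
      (forall i, continuous (partial i f)),
      (forall i j y, derivable (partial i f) y (evec R j)) &
      (forall i j, continuous (partial j (partial i f)))].

(* g' is the derivative of g on the set A (one-sided at boundary points of
   A, i.e. the difference quotient is taken with s in A, s <> t). *)
Definition has_deriv_on (R : realType) (V : normedModType R) (A : set R)
  (g g' : R -> V) : Prop :=
  forall t, A t ->
    (fun s => (s - t)^-1 *: (g s - g t)) @ within A t^' --> g' t.

Definition Ico0 (R : realType) (T : \bar R) : set R :=
  [set t | 0 <= t /\ (t%:E < T)%E].

(* Along a solution, with y = x + beta x' the point where the gradient is
   evaluated, V' = <x' + beta x'', grad f(y)> + <x', x''>.  Substituting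
   x'' = - gamma x' - grad f(y) turns each coordinate into the quadratic form
   - gamma a^2 - beta gamma a p - beta p^2
   = - gamma/2 a^2 - gamma/2 (a + beta p)^2 - beta (1 - beta gamma/2) p^2,
   which is at most - delta1 (a^2 + p^2) because c <= gamma <= C.  The chain
   rule for f along y only needs continuous first partials. *)
From HB Require Import structures.
From mathcomp Require Import all_boot all_order all_algebra.
From mathcomp Require Import all_classical all_reals all_analysis.
From mathcomp Require Import ring lra.
Import Order.TTheory GRing.Theory Num.Theory.
Import numFieldNormedType.Exports.
Local Open Scope classical_set_scope.
Local Open Scope ring_scope.
Set Implicit Arguments. Unset Strict Implicit.

Section RowNorm.
Variables (R : realType) (d : nat).

Lemma rV_coord_le_norm (v : 'rV[R]_d) i : `|v 0 i| <= `|v|.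
Proof.
have -> : `|v| = mx_norm v by [].
by rewrite mx_normrE; apply/bigmax_geP; right; exists (0, i).
Qed.

Lemma rV_norm_le (v : 'rV[R]_d) r :
  0 <= r -> (forall j, `|v 0 j| <= r) -> `|v| <= r.
Proof.
move=> r0 vr; have -> : `|v| = mx_norm v by [].
rewrite mx_normrE; apply/bigmax_leP; split => // -[i j] _ /=.
by rewrite ord1; exact: vr.
Qed.

Definition row_prefix (h : 'rV[R]_d) (k : nat) : 'rV[R]_d :=
  \row_(j < d) (if (j < k)%N then h 0 j else 0).

Lemma row_prefix0 (h : 'rV[R]_d) : row_prefix h 0 = 0.
Proof. by apply/rowP => j; rewrite !mxE. Qed.

Lemma row_prefix_full (h : 'rV[R]_d) : row_prefix h d = h.
Proof. by apply/rowP => j; rewrite !mxE ltn_ord. Qed.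

Lemma row_prefixS (h : 'rV[R]_d) (k : 'I_d) :
  row_prefix h k.+1 = row_prefix h k + h 0 k *: evec R k.
Proof.
apply/rowP => j; rewrite !mxE eqxx /=.
have [->|njk] := eqVneq j k; first by rewrite ltnS leqnn ltnn add0r mulr1.
by rewrite ltnS leq_eqVlt val_eqE (negbTE njk) mulr0 addr0.
Qed.

Lemma norm_row_prefix_shift_le (h : 'rV[R]_d) (k : 'I_d) u :
  `|u| <= `|h| -> `|row_prefix h k + u *: evec R k| <= `|h|.
Proof.
move=> uh; apply: rV_norm_le => // j; rewrite !mxE eqxx /=.
have [->|njk] := eqVneq j k; first by rewrite ltnn add0r mulr1.
rewrite mulr0 addr0; case: ifP => _; [exact: rV_coord_le_norm | by rewrite normr0].
Qed.

End RowNorm.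

Section DirectionalMVT.
Variables (R : realType) (d : nat) (g : 'rV[R]_d -> R) (q e : 'rV[R]_d).

Lemma is_derive_along u :
  derivable g (q + u *: e) e ->
  is_derive u 1 (fun w : R => g (q + w *: e)) ('D_e g (q + u *: e)).
Proof.
move=> dg.
have quotE : (fun h : R => h^-1 *: (g (q + (h *: 1 + u) *: e) - g (q + u *: e)))
    = (fun h => h^-1 *: (g (h *: e + (q + u *: e)) - g (q + u *: e))).
  apply/funext => h /=; congr (_ *: (g _ - _)).
  by rewrite [h *: _]mulr1 scalerDl addrCA addrA.
by apply: DeriveDef; rewrite ?/derivable ?/derive quotE.
Qed.

Lemma MVT_along (h : R) :
  (forall u : R, derivable g (q + u *: e) e) ->
  exists2 th : R, `|th| <= `|h| & g (q + h *: e) - g q = h * 'D_e g (q + th *: e).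
Proof.
move=> dg; pose G w := g (q + w *: e).
have G' (w : R) : is_derive w 1 G ('D_e g (q + w *: e)) by exact: is_derive_along.
have Gc : continuous G.
  move=> w; have := @ex_derive _ _ _ _ _ _ _ (G' w).
  by move/derivable1_diffP/differentiable_continuous.
have Gq : G 0 = g q by rewrite /G scale0r addr0.
have [h0|h0] := leP 0 h.
- have [th] := MVT_segment h0 (fun w _ => G' w) (continuous_subspaceT Gc).
  rewrite in_itv /= Gq subr0 => /andP[th0 thh] ->.
  by exists th; rewrite 1?mulrC // !ger0_norm // (le_trans th0 thh).
- have [th] := MVT_segment (ltW h0) (fun w _ => G' w) (continuous_subspaceT Gc).
  rewrite in_itv /= Gq sub0r => /andP[hth th0] E.
  exists th; last by rewrite -opprB E mulrN opprK mulrC.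
  by rewrite !ler0_norm // ?lerN2 // ltW.
Qed.

End DirectionalMVT.

Section LinearApproximation.
Variables (R : realType) (d : nat) (g : 'rV[R]_d -> R).
Hypothesis g_derivable : forall i y, derivable g y (evec R i).
Hypothesis partial_continuous : forall i, continuous (partial i g).

Definition linear_approx_err (p h : 'rV[R]_d) : R :=
  g (p + h) - g p - \sum_(i < d) h 0 i * partial i g p.

(* Telescoping over row prefixes, each step is a one-variable mean value
   estimate against the partial derivative at p. *)
Lemma linear_approx_err_le p eps : 0 < eps -> exists2 del, 0 < del &
  forall h, `|h| < del -> `|linear_approx_err p h| <= eps * `|h|.
Proof.
move=> eps0; pose e := eps / d.+1%:R.
have e0 : 0 < e by rewrite divr_gt0.
have near_p : \forall y \near p, forall i : 'I_d, `|partial i g p - partial i g y| < e.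
  have near_p_i (i : 'I_d) : \forall y \near p, `|partial i g p - partial i g y| < e.
    exact: (cvgr_dist_lt _ _ (@partial_continuous i p) _ e0).
  exact: (@filter_forall _ 'I_d (fun i y => `|partial i g p - partial i g y| < e)
    (nbhs p) _ near_p_i).
have [del del0 pdel] := (nbhs_normP _ _).1 near_p.
exists del => // h hdel.
have step (k : 'I_d) : `|g (p + row_prefix h k.+1) - g (p + row_prefix h k)
    - h 0 k * partial k g p| <= e * `|h|.
  have [th thh mvt] := @MVT_along _ _ g (p + row_prefix h k) (evec R k) (h 0 k)
    (fun u => @g_derivable k _).
  rewrite row_prefixS addrA mvt -mulrBr normrM mulrC.
  apply: ler_pM => //; last exact: rV_coord_le_norm.
  rewrite distrC ltW // (pdel _) //= -addrA opprD addrA subrr sub0r normrN.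
  apply: le_lt_trans hdel.
  exact/norm_row_prefix_shift_le/(le_trans thh)/rV_coord_le_norm.
have telescope_err : linear_approx_err p h = \sum_(k < d)
    (g (p + row_prefix h k.+1) - g (p + row_prefix h k) - h 0 k * partial k g p).
  rewrite /linear_approx_err sumrB; congr (_ - _).
  rewrite -(big_mkord xpredT (fun k => g (p + row_prefix h k.+1) - g (p + row_prefix h k))).
  by rewrite telescope_sumr // row_prefix_full row_prefix0 addr0.
rewrite telescope_err; apply: le_trans (ler_norm_sum _ _ _) _.
apply: le_trans (ler_sum _ (fun k _ => step k)) _.
rewrite sumr_const card_ord -mulr_natr mulrAC ler_wpM2r //.
by rewrite /e mulrAC ler_pdivrMr // ler_pM2l // ler_nat.
Qed.

End LinearApproximation.

Lemma cvgr_sum (R : realType) (T : Type) (F : set_system T) (FF : Filter F) n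
    (u : 'I_n -> T -> R) (a : 'I_n -> R) :
  (forall i, u i s @[s --> F] --> a i) ->
  \sum_(i < n) u i s @[s --> F] --> \sum_(i < n) a i.
Proof. by move=> ua; apply: cvg_big => //; exact: add_continuous. Qed.

Lemma cvg_coord (R : realType) (d : nat) (T : Type) (F : set_system T) (FF : Filter F)
    (u : T -> 'rV[R]_d) (v : 'rV[R]_d) i :
  u s @[s --> F] --> v -> u s 0 i @[s --> F] --> v 0 i.
Proof. exact: (continuous_cvg FF (@coord_continuous R 1 d 0 i v)). Qed.

Section DifferenceQuotients.
Variables (R : realType) (A : set R).

Lemma eq_has_deriv_on (V : normedModType R) (g g1' g2' : R -> V) :
  has_deriv_on A g g1' -> (forall t, A t -> g1' t = g2' t) -> has_deriv_on A g g2'.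
Proof. by move=> dg e t At; rewrite -e //; exact: dg. Qed.

Lemma has_deriv_onD (V : normedModType R) (g h g' h' : R -> V) :
  has_deriv_on A g g' -> has_deriv_on A h h' ->
  has_deriv_on A (fun t => g t + h t) (fun t => g' t + h' t).
Proof.
move=> dg dh t At.
under eq_cvg do rewrite opprD addrACA scalerDr.
exact: cvgD (dg t At) (dh t At).
Qed.

Lemma has_deriv_onZ (V : normedModType R) (a : R) (g g' : R -> V) :
  has_deriv_on A g g' -> has_deriv_on A (fun t => a *: g t) (fun t => a *: g' t).
Proof.
move=> dg t At.
under eq_cvg do rewrite -scalerBr scalerA mulrC -scalerA.
by apply: cvgZ; [exact: cvg_cst | exact: dg].
Qed.

Lemma cvg_sub_dnbhs_within (t : R) : (fun s => s - t) @ within A t^' --> 0.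
Proof.
rewrite -(subrr t); apply: cvgB; last exact: cvg_cst.
by move=> P Pt; apply: (cvg_within A); exact: nbhs_dnbhs.
Qed.

Lemma quotient_littleo_cvg0 (V : normedModType R) (E : V -> R) (y : R -> V)
    (t : R) (v : V) :
  (forall eps, 0 < eps -> exists2 del, 0 < del &
     forall h, `|h| < del -> `|E h| <= eps * `|h|) ->
  (fun s => (s - t)^-1 *: (y s - y t)) @ within A t^' --> v ->
  (fun s => (s - t)^-1 * E (y s - y t)) @ within A t^' --> 0.
Proof.
move=> Eo yv; apply/cvgrPdist_le => eps eps0.
have v1 : 0 < `|v| + 1 by rewrite ltr_wpDl.
have [del del0 Edel] := Eo (eps / (`|v| + 1)) (divr_gt0 eps0 v1).
near=> s.
have st : s != t by near: s; apply: (cvg_within A); exact: (nbhs_dnbhs_neq t).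
have vQ : `|v - (s - t)^-1 *: (y s - y t)| < 1.
  by near: s; exact: (cvgr_dist_lt _ _ yv _ ltr01).
have st_del : `|s - t| < del / (`|v| + 1).
  near: s; apply: (cvg_within A); apply: nbhs_dnbhs; apply/nbhs_normP.
  by exists (del / (`|v| + 1)); [rewrite /= divr_gt0 | move=> z /=; rewrite distrC].
set Q := (s - t)^-1 *: (y s - y t) in vQ *.
have Qv : `|Q| <= `|v| + 1.
  have := ler_normB v (v - Q); rewrite opprB addrC subrK => QvQ; lra.
have yQ : y s - y t = (s - t) *: Q by rewrite scalerA mulfV ?subr_eq0 // scale1r.
have y_del : `|y s - y t| < del.
  rewrite yQ normrZ; apply: le_lt_trans (ler_wpM2l _ Qv) _ => //.
  by rewrite -ltr_pdivlMr.
rewrite sub0r normrN normrM normfV ler_pdivrMl ?normr_gt0 ?subr_eq0 //.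
apply: le_trans (Edel _ y_del) _.
rewrite yQ normrZ mulrCA ler_wpM2l // mulrAC ler_pdivrMr //.
by rewrite ler_wpM2l // ltW.
Unshelve. all: by end_near.
Qed.

Variable d : nat.

Lemma has_deriv_on_comp (g : 'rV[R]_d -> R) (y y' : R -> 'rV[R]_d) :
  (forall i z, derivable g z (evec R i)) -> (forall i, continuous (partial i g)) ->
  has_deriv_on A y y' ->
  has_deriv_on A (fun t => g (y t))
    (fun t => \sum_(i < d) y' t 0 i * partial i g (y t)).
Proof.
move=> dg pc dy t At.
pose Q s := (s - t)^-1 *: (y s - y t).
have -> : (fun s => (s - t)^-1 *: (g (y s) - g (y t))) =
    (fun s => \sum_(i < d) Q s 0 i * partial i g (y t)
              + (s - t)^-1 * linear_approx_err g (y t) (y s - y t)).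
  apply/funext => s /=; rewrite /linear_approx_err [y t + _]addrC subrK.
  have -> : \sum_(i < d) Q s 0 i * partial i g (y t) =
      (s - t)^-1 * \sum_(i < d) (y s - y t) 0 i * partial i g (y t).
    by rewrite big_distrr; apply: eq_bigr => i _; rewrite /Q !mxE /= mulrA.
  rewrite -[LHS]/((s - t)^-1 * (g (y s) - g (y t))); ring.
rewrite -[X in _ --> X]addr0; apply: cvgD.
  apply: cvgr_sum => i; apply: cvgM; last exact: cvg_cst.
  exact: cvg_coord (dy t At).
apply: quotient_littleo_cvg0 (dy t At) => eps eps0.
exact: linear_approx_err_le.
Qed.

Lemma has_deriv_on_sqnorm (z z' : R -> 'rV[R]_d) :
  has_deriv_on A z z' ->
  has_deriv_on A (fun t => sqnorm (z t))
    (fun t => 2 * \sum_(i < d) z t 0 i * z' t 0 i).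
Proof.
move=> dz t At; pose Q s := (s - t)^-1 *: (z s - z t).
have -> : (fun s => (s - t)^-1 *: (sqnorm (z s) - sqnorm (z t))) =
    (fun s => \sum_(i < d) Q s 0 i * (z t 0 i + z t 0 i + (s - t) * Q s 0 i)).
  apply/funext => s; rewrite /sqnorm /Q.
  have [->|st] := eqVneq s t.
    rewrite !subrr invr0 scale0r; apply/esym/big1 => i _.
    by rewrite mxE !mul0r.
  rewrite -sumrB -[LHS]/((s - t)^-1 * _) big_distrr; apply: eq_bigr => i _.
  by rewrite !mxE /=; field; rewrite subr_eq0.
have -> : 2 * \sum_(i < d) z t 0 i * z' t 0 i =
    \sum_(i < d) z' t 0 i * (z t 0 i + z t 0 i + 0 * z' t 0 i).
  by rewrite big_distrr; apply: eq_bigr => i _ /=; ring.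
have Qi i : Q s 0 i @[s --> within A t^'] --> z' t 0 i.
  exact: cvg_coord (dz t At).
apply: cvgr_sum => i; apply: cvgM; first exact: Qi.
apply: cvgD; first exact: cvg_cst.
by apply: cvgM; [exact: cvg_sub_dnbhs_within | exact: Qi].
Qed.

Lemma has_deriv_on_lyapunov (g : 'rV[R]_d -> R) (beta : R) (x x1 x2 : R -> 'rV[R]_d) :
  (forall i z, derivable g z (evec R i)) -> (forall i, continuous (partial i g)) ->
  has_deriv_on A x x1 -> has_deriv_on A x1 x2 ->
  has_deriv_on A (fun t => g (x t + beta *: x1 t) + 2^-1 * sqnorm (x1 t))
    (fun t => \sum_(i < d) ((x1 t + beta *: x2 t) 0 i * partial i g (x t + beta *: x1 t)
                            + x1 t 0 i * x2 t 0 i)).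
Proof.
move=> dg pc dx dx1.
have dy : has_deriv_on A (fun t => x t + beta *: x1 t) (fun t => x1 t + beta *: x2 t).
  exact/has_deriv_onD/has_deriv_onZ.
have dV : has_deriv_on A (fun t => g (x t + beta *: x1 t) + 2^-1 * sqnorm (x1 t)) _
  := has_deriv_onD (has_deriv_on_comp dg pc dy)
       (has_deriv_onZ (a := 2^-1) (has_deriv_on_sqnorm dx1)).
apply: (eq_has_deriv_on dV) => t _.
by rewrite big_split /=; congr (_ + _); exact: mulKf.
Qed.

End DifferenceQuotients.

Lemma damped_dissipation_le (R : realFieldType) (g beta m a p b : R) :
  0 <= g -> m <= Num.min (g / 2) (beta * (1 - beta * g / 2)) ->
  b = - g * a - p ->
  (a + beta * b) * p + a * b <= - m * (a ^+ 2 + p ^+ 2).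
Proof.
move=> g0; rewrite le_min => /andP[mg mb] ->.
have sq : 0 <= g / 2 * (a + beta * p) ^+ 2 by rewrite mulr_ge0 ?sqr_ge0 ?divr_ge0.
have ma : m * a ^+ 2 <= g / 2 * a ^+ 2 by rewrite ler_wpM2r ?sqr_ge0.
have mp : m * p ^+ 2 <= beta * (1 - beta * g / 2) * p ^+ 2 by rewrite ler_wpM2r ?sqr_ge0.
have -> : (a + beta * (- g * a - p)) * p + a * (- g * a - p) =
    - (g / 2 * a ^+ 2 + g / 2 * (a + beta * p) ^+ 2
       + beta * (1 - beta * g / 2) * p ^+ 2) by field.
lra.
Qed.

Section DissipationRate.
Variables (R : realFieldType) (c C beta : R).
Hypotheses (c_gt0 : 0 < c) (beta_gt0 : 0 < beta).

Lemma dissipation_rate_gt0 : beta < 2 * c / C ^+ 2 ->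
  0 < Num.min (c / 2) (beta * (1 - beta * C ^+ 2 / (2 * c))).
Proof.
move=> beta_lt; rewrite lt_min divr_gt0 //= pmulr_rgt0 // subr_gt0.
have C2_gt0 : 0 < C ^+ 2.
  rewrite lt_def sqr_ge0 andbT; apply: contraTneq beta_lt => ->.
  by rewrite invr0 mulr0 -leNgt ltW.
by rewrite ltr_pdivrMr ?mulr_gt0 // mul1r -ltr_pdivlMr.
Qed.

Lemma dissipation_rate_le (g : R) : c <= g <= C ->
  Num.min (c / 2) (beta * (1 - beta * C ^+ 2 / (2 * c)))
  <= Num.min (g / 2) (beta * (1 - beta * g / 2)).
Proof.
move=> /andP[cg gC]; rewrite le_min !ge_min.
apply/andP; split; apply/orP; [left; lra | right].
have gC2 : g / 2 <= C ^+ 2 / (2 * c).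
  rewrite ler_pdivlMr ?mulr_gt0 //.
  have -> : g / 2 * (2 * c) = g * c by field.
  rewrite expr2; apply: le_trans (ler_wpM2r (ltW c_gt0) gC) _.
  have cC := le_trans cg gC.
  by rewrite ler_pM2l // (lt_le_trans c_gt0 cC).
by rewrite ler_pM2l // lerD2l lerN2 -2!mulrA ler_pM2l.
Qed.

End DissipationRate.

Theorem mainTheorem11 (R : realType) (d : nat) (f : 'rV[R]_d -> R)
  (gamma : R -> R) (c C beta : R) (T : \bar R) (x x1 x2 : R -> 'rV[R]_d) :
  C2 f ->
  {within `[0, +oo[, continuous gamma} ->
  0 < c -> c <= C ->
  (forall t, 0 <= t -> c <= gamma t <= C) ->
  0 < beta -> beta < 2 * c / C ^+ 2 ->
  has_deriv_on (Ico0 T) x x1 ->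
  has_deriv_on (Ico0 T) x1 x2 ->
  {within Ico0 T, continuous x2} ->
  (forall t, Ico0 T t ->
     x2 t + gamma t *: x1 t + grad f (x t + beta *: x1 t) = 0) ->
  let V := fun t => f (x t + beta *: x1 t) + 2^-1 * sqnorm (x1 t) in
  let delta1 := Num.min (c / 2) (beta * (1 - beta * C ^+ 2 / (2 * c))) in
  0 < delta1 /\
  exists V' : R -> R, has_deriv_on (Ico0 T) V V' /\
    forall t, Ico0 T t ->
      V' t <= - delta1 * (sqnorm (x1 t) + sqnorm (grad f (x t + beta *: x1 t))).
Proof.
move=> [_ f_derivable partial_continuous _ _] _ c_gt0 _ gamma_bounds beta_gt0
  beta_lt dx dx1 _ ode V delta1.
split; first exact: dissipation_rate_gt0.
eexists; split; first exact: has_deriv_on_lyapunov f_derivable partial_continuous dx dx1.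
move=> t At; have [t_ge0 _] := At; have gamma_t := gamma_bounds t t_ge0.
rewrite /sqnorm -big_split mulr_sumr; apply: ler_sum => i _; rewrite !mxE.
apply: damped_dissipation_le.
- by case/andP: gamma_t => cg _; exact: le_trans (ltW c_gt0) cg.
- exact: dissipation_rate_le.
- have := congr1 (fun v : 'rV[R]_d => v 0 i) (ode t At).
  rewrite !mxE => ode_i; lra.
Qed.
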